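(* Let $G=(V,E)$ be a simple graph with $V=\{1,\dots,n\}$, adjacency matrix $A$, and let $w\in\mathbb{R}^n$ with $w\geq 0$. Then $$\alpha_w(G)=\max\{w^\top x \mid x \text{ solves } \mathrm{LCP}(A+I,-\mathbf{e})\},$$ where $I$ is the $n\times n$ identity matrix and $\mathbf{e}$ is the all-ones vector in $\mathbb{R}^n$.
   Context: A simple graph is a finite undirected graph without self-loops or multiple edges; its adjacency matrix $A=[a_{ij}]$ has $a_{ij}=1$ if $\{i,j\}\in E$ and $0$ otherwise. An independent set is a set of pairwise non-adjacent vertices. For a weight vector $w$, $\alpha_w(G):=\max\{\sum_{i\in S}w_i \mid S\subseteq V \text{ independent}\}$. For $M\in\mathbb{R}^{n\times n}$, $q\in\mathbb{R}^n$, a vector $x\in\mathbb{R}^n$ solves the linear complementarity problem $\mathrm{LCP}(M,q)$ if $x\geq 0$, $Mx+q\geq 0$ and $x^\top(Mx+q)=0$. *)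

From mathcomp Require Import all_boot all_order all_algebra.
Set Implicit Arguments. Unset Strict Implicit. Unset Printing Implicit Defensive.
Import Order.TTheory GRing.Theory Num.Theory.
Local Open Scope ring_scope.

Definition simple_graph (n : nat) (e : rel 'I_n) : Prop :=
  irreflexive e /\ symmetric e.

Definition adjmx (R : nzRingType) (n : nat) (e : rel 'I_n) : 'M[R]_n :=
  \matrix_(i, j) (if e i j then 1 else 0).

Definition independent (n : nat) (e : rel 'I_n) (S : {set 'I_n}) : bool :=
  [forall i in S, forall j in S, ~~ e i j].

(* alpha_w(G) = max over independent sets S of sum_{i in S} w_i.
   The empty set is independent (value 0), so the max is >= 0 and
   the big max with neutral element 0 computes exactly this maximum. *)
Definition alpha_w (R : realDomainType) (n : nat) (e : rel 'I_n) (w : 'cV[R]_n) : R :=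
  \big[Num.max/0]_(S : {set 'I_n} | independent e S) \sum_(i in S) w i ord0.

Definition solves_LCP (R : numDomainType) (n : nat) (M : 'M[R]_n) (q x : 'cV[R]_n) : Prop :=
  (forall i, 0 <= x i ord0) /\
  (forall i, 0 <= (M *m x + q) i ord0) /\
  (x^T *m (M *m x + q)) ord0 ord0 = 0.

Definition ones_cV (R : nzRingType) (n : nat) : 'cV[R]_n := const_mx 1.

From mathcomp Require Import all_boot all_order all_algebra.
Import Order.TTheory GRing.Theory Num.Theory.
Local Open Scope ring_scope.

(* Write N[i] for the closed neighbourhood of i, so that row i of A + I sums
   x over N[i] and x solves LCP(A + I, -e) iff x >= 0, x(N[i]) >= 1 for all i,
   and x(N[i]) = 1 wherever x_i > 0.  The indicator vector of a maximal
   independent set S is such a solution: N[i] meets S exactly in i for i in S,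
   and N[i] meets S for i outside S.  Extending a maximum-weight independent
   set to a maximal one keeps its weight since w >= 0, so alpha_w is attained.
   Conversely, for any solution x, greedily pick a vertex v of maximal weight
   in the support S of x: the part of w^T x carried by N[v] is at most
   w_v * x(N[v] :&: S) <= w_v, and recursing on S minus N[v] builds an
   independent set whose weight dominates w^T x. *)

Lemma sumr_le_subset (R : numDomainType) (T : finType) (A B : {set T})
    (F : T -> R) :
  {in B, forall i, 0 <= F i} -> A \subset B ->
  \sum_(i in A) F i <= \sum_(i in B) F i.
Proof.
move=> F_ge0 AB; rewrite [leRHS](big_setID A) /= (setIidPr AB) lerDl.
by apply: sumr_ge0 => i; rewrite in_setD => /andP[_ /F_ge0].
Qed.

Lemma big_setI_support {R : nmodType} {T : finType} (A : {set T})
    {S : {set T}} {F : T -> R} :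
  (forall i, i \notin S -> F i = 0) ->
  \sum_(i in A) F i = \sum_(i in A :&: S) F i.
Proof.
move=> F_supp; rewrite (big_setID S) /= [X in _ + X]big1 ?addr0 // => i.
by rewrite in_setD => /andP[/F_supp].
Qed.

Lemma big_support {R : nmodType} {T : finType} (S : {set T}) {F : T -> R} :
  (forall i, i \notin S -> F i = 0) -> \sum_i F i = \sum_(i in S) F i.
Proof.
move=> F_supp; rewrite [RHS]big_mkcond; apply: eq_bigr => i _.
by case: ifPn => // /F_supp.
Qed.

Lemma sum_indicator (R : pzSemiRingType) (T : finType) (A S : {set T}) :
  \sum_(j in A) ((j \in S)%:R : R) = #|A :&: S|%:R.
Proof.
rewrite (big_setID S) /= [X in _ + X]big1 ?addr0; last first.
  by move=> j; rewrite in_setD => /andP[/negbTE ->].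
rewrite -sum1_card natr_sum; apply: eq_bigr => j.
by rewrite inE => /andP[_ ->].
Qed.

Lemma mx_dotE (R : pzSemiRingType) (n : nat) (x y : 'cV[R]_n) :
  (x^T *m y) ord0 ord0 = \sum_i x i ord0 * y i ord0.
Proof. by rewrite mxE; apply: eq_bigr => i _; rewrite mxE. Qed.

Section Graph.

Context {n : nat} (e : rel 'I_n).

Definition closed_nbhd (i : 'I_n) : {set 'I_n} := [set j | (j == i) || e i j].

Lemma independentP (S : {set 'I_n}) :
  reflect {in S &, forall i j, ~~ e i j} (independent e S).
Proof.
apply: (iffP forall_inP) => [indS i j iS jS | indS i iS].
  exact: (forall_inP (indS i iS)).
by apply/forall_inP => j; apply: indS.
Qed.

Lemma independent0 : independent e set0.
Proof. by apply/independentP => i; rewrite inE. Qed.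

Lemma le_alpha_w {R : realDomainType} (w : 'cV[R]_n) {S : {set 'I_n}} :
  independent e S -> \sum_(i in S) w i ord0 <= alpha_w e w.
Proof. exact: le_bigmax_cond. Qed.

Lemma alpha_w_attained {R : realDomainType} (w : 'cV[R]_n) :
  (forall i, 0 <= w i ord0) ->
  exists2 S, independent e S & \sum_(i in S) w i ord0 = alpha_w e w.
Proof.
move=> w_ge0; pose F (S : {set 'I_n}) := \sum_(i in S) w i ord0.
have F_ge0 S : independent e S -> 0 <= F S by move=> _; apply: sumr_ge0.
rewrite /alpha_w (bigmax_eq_arg _ set0 _ F independent0 F_ge0).
by case: arg_maxP => [|S indS _]; [exact: independent0 | exists S].
Qed.

Hypotheses (e_irr : irreflexive e) (e_sym : symmetric e).

Lemma independentU1 (v : 'I_n) (S : {set 'I_n}) :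
  independent e S -> {in S, forall j, ~~ e v j} -> independent e (v |: S).
Proof.
move=> /independentP indS v_nadj; apply/independentP => i j.
rewrite !inE => /predU1P[-> | iS] /predU1P[-> | jS].
- by rewrite e_irr.
- exact: v_nadj.
- by rewrite e_sym v_nadj.
- exact: indS.
Qed.

Lemma closed_nbhd_independent (S : {set 'I_n}) (i : 'I_n) :
  independent e S -> i \in S -> closed_nbhd i :&: S = [set i].
Proof.
move=> /independentP indS iS; apply/setP => j; rewrite !inE.
case: (eqVneq j i) => [-> // | _] /=.
by apply/andP => -[eij jS]; move: (indS i j iS jS); rewrite eij.
Qed.

Lemma maxset_independent_dominating {S : {set 'I_n}} {i : 'I_n} :
  maxset (independent e) S -> i \notin S -> exists2 j, j \in S & e i j.
Proof.
move=> maxS iNS; apply/exists_inP; apply: contraNT iNS => /exists_inP i_nadj.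
have indU : independent e (i |: S).
  apply: independentU1 (maxsetp maxS) _ => j jS.
  by apply/negP => eij; apply: i_nadj; exists j.
by rewrite -(maxsetsup maxS indU (subsetUr _ _)) setU11.
Qed.

Lemma fractional_independent_rounding {R : realDomainType} (W X : 'I_n -> R)
    {S : {set 'I_n}} :
  (forall i, 0 <= W i) -> (forall i, 0 <= X i) ->
  {in S, forall i, \sum_(j in S :&: closed_nbhd i) X j <= 1} ->
  exists I : {set 'I_n}, [/\ independent e I, I \subset S &
    \sum_(i in S) W i * X i <= \sum_(i in I) W i].
Proof.
move=> W_ge0 X_ge0; elim: {S}#|S| {-2}S (leqnn #|S|) => [|k IH] S.
  rewrite leqn0 cards_eq0 => /eqP -> _.
  by exists set0; rewrite sub0set !big_set0 independent0.
move=> cardS packS; have [-> | [v0 v0S]] := set_0Vmem S.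
  by exists set0; rewrite sub0set !big_set0 independent0.
case: (arg_maxP W v0S) => v vS0 v_max; have vS : v \in S := vS0.
pose S' := S :\: closed_nbhd v.
have S'S : S' \subset S by apply: subsetDl.
have cardS' : (#|S'| <= k)%N.
  have S'_sub : S' \subset S :\ v.
    by apply/subsetP => j; rewrite !inE negb_or => /andP[/andP[-> _] ->].
  apply: leq_trans (subset_leq_card S'_sub) _.
  by move: cardS; rewrite (cardsD1 v S) vS.
have packS' : {in S', forall i, \sum_(j in S' :&: closed_nbhd i) X j <= 1}.
  move=> i iS'; apply: le_trans (packS i (subsetP S'S i iS')).
  by apply: sumr_le_subset => //; apply: setSI.
have [I' [indI' I'S' leI']] := IH S' cardS' packS'.
have I'_nadj : {in I', forall j, ~~ e v j}.
  by move=> j /(subsetP I'S'); rewrite !inE negb_or => /andP[/andP[_ ->]].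
have vNI' : v \notin I'.
  by apply/negP => /(subsetP I'S'); rewrite !inE eqxx.
exists (v |: I'); split; first exact: independentU1.
  by rewrite subUset sub1set vS (subset_trans I'S' S'S).
rewrite big_setU1 //= (big_setID (closed_nbhd v)) /= lerD //.
apply: le_trans (_ : \sum_(i in S :&: closed_nbhd v) W v * X i <= _).
  apply: ler_sum => i; rewrite inE => /andP[iS _].
  by apply: ler_wpM2r => //; apply: v_max.
by rewrite -mulr_sumr ler_piMr // packS.
Qed.

Section LCP.

Variable R : realDomainType.

Local Notation M := (adjmx R e + 1%:M).
Local Notation q := (- ones_cV R n).

Lemma LCP_residualE (x : 'cV[R]_n) (i : 'I_n) :
  (M *m x + q) i ord0 = \sum_(j in closed_nbhd i) x j ord0 - 1.
Proof.
rewrite !mxE [in RHS]big_mkcond; congr (_ - _); apply: eq_bigr => j _.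
rewrite !mxE inE eq_sym; case: (eqVneq i j) => [<- | _]/=.
  by rewrite e_irr add0r mul1r.
by rewrite addr0; case: (e i j); rewrite ?mul1r ?mul0r.
Qed.

Lemma maxset_independent_solves_LCP (S : {set 'I_n}) :
  maxset (independent e) S -> solves_LCP M q (\col_i (i \in S)%:R).
Proof.
move=> maxS; have indS := maxsetp maxS.
have nbhdE i : \sum_(j in closed_nbhd i) (\col_i (i \in S)%:R : 'cV[R]_n) j ord0
              = #|closed_nbhd i :&: S|%:R.
  by rewrite -sum_indicator; apply: eq_bigr => j _; rewrite mxE.
split; first by move=> i; rewrite mxE ler0n.
split.
  move=> i; rewrite LCP_residualE nbhdE subr_ge0 ler1n card_gt0.
  case: (boolP (i \in S)) => [iS | iNS].
    by apply/set0Pn; exists i; rewrite closed_nbhd_independent // set11.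
  have [j jS eij] := maxset_independent_dominating maxS iNS.
  by apply/set0Pn; exists j; rewrite !inE eij orbT.
rewrite mx_dotE big1 // => i _; rewrite LCP_residualE nbhdE mxE.
case: (boolP (i \in S)) => [iS | _]; last by rewrite mul0r.
by rewrite closed_nbhd_independent // cards1 subrr mulr0.
Qed.

Lemma LCP_solution_le_alpha_w (w x : 'cV[R]_n) :
  (forall i, 0 <= w i ord0) -> solves_LCP M q x ->
  (w^T *m x) ord0 ord0 <= alpha_w e w.
Proof.
move=> w_ge0 [x_ge0 [res_ge0 compl]].
pose S := [set i | x i ord0 != 0].
have x_supp i : i \notin S -> x i ord0 = 0 by rewrite inE negbK => /eqP.
have packS : {in S, forall i, \sum_(j in S :&: closed_nbhd i) x j ord0 <= 1}.
  move=> i iS; have xi_neq0 : x i ord0 != 0 by rewrite inE in iS.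
  have /eqP : x i ord0 * (M *m x + q) i ord0 = 0.
    rewrite mx_dotE in compl; apply: (psumr_eq0P _ compl) => // j _.
    exact: mulr_ge0.
  rewrite mulf_eq0 (negbTE xi_neq0) LCP_residualE subr_eq0 => /eqP <-.
  by rewrite setIC -(big_setI_support (closed_nbhd i) x_supp).
have [I [indI _ leI]] := fractional_independent_rounding
  (fun i => w i ord0) (fun i => x i ord0) w_ge0 x_ge0 packS.
rewrite mx_dotE (big_support S) => [|i /x_supp ->]; last by rewrite mulr0.
exact: le_trans leI (le_alpha_w w indI).
Qed.

End LCP.

End Graph.

Theorem theorem1 (R : realFieldType) (n : nat) (e : rel 'I_n) (w : 'cV[R]_n) :
  simple_graph e ->
  (forall i, 0 <= w i ord0) ->
  (exists x : 'cV[R]_n,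
      solves_LCP (adjmx R e + 1%:M) (- ones_cV R n) x /\
      (w^T *m x) ord0 ord0 = alpha_w e w) /\
  (forall x : 'cV[R]_n,
      solves_LCP (adjmx R e + 1%:M) (- ones_cV R n) x ->
      (w^T *m x) ord0 ord0 <= alpha_w e w).
Proof.
move=> [e_irr e_sym] w_ge0.
split; last by move=> x; apply: LCP_solution_le_alpha_w.
have [J indJ wJ] := alpha_w_attained e w w_ge0.
have [S maxS JS] := maxset_exists indJ.
exists (\col_i (i \in S)%:R); split; first exact: maxset_independent_solves_LCP.
have -> : (w^T *m \col_i (i \in S)%:R) ord0 ord0 = \sum_(i in S) w i ord0.
  rewrite mx_dotE [RHS]big_mkcond; apply: eq_bigr => i _; rewrite !mxE.
  by case: (i \in S); rewrite ?mulr1 ?mulr0.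
apply/le_anti/andP; split; first exact: le_alpha_w (maxsetp maxS).
by rewrite -wJ; apply: sumr_le_subset => // i _; apply: w_ge0.
Qed.
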